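(* Let $L$ be a finite distributive lattice and $K=[\hat0_K,\hat1_K]$ a cutting of $L$. Then $$R(L\boxplus K,x)=\begin{cases}R(L,x)+x^{h_L(\hat0_K)+1}R(K,x), & \text{if }\hat1_K=\hat1_L;\\ R(K,x)+x\,R(L,x), &\text{if }\hat0_K=\hat0_L.\end{cases}$$
   Context: For a finite poset $P$, $\mathcal{F}(P)$ is the set of filters (up-sets) of $P$ ordered by reverse inclusion; every finite distributive lattice $L$ is isomorphic to some $\mathcal{F}(P)$; $\hat0_L,\hat1_L$ denote the least and greatest elements of $L$. A cutting of $L$ is an interval $K=[\hat0_K,\hat1_K]$ of $L$ such that every maximal chain of $L$ meets $K$. For a cutting $K$ of $L=\mathcal{F}(P)$, let $S=\hat0_K\setminus\hat1_K$, $S_0$ the set of maximal elements of $P\setminus\hat0_K$, $S_1$ the set of minimal elements of $\hat1_K$. The poset $P_K$ is $P\cup\{x_K\}$ ($x_K$ new) where the order on $P$ is unchanged, $z<x_K$ iff $z\le s$ for some $s\in S_0$, $x_K<y$ iff $y\ge s$ for some $s\in S_1$, and $x_K$ is incomparable to every element of $S$. The convex expansion is $L\boxplus K:=\mathcal{F}(P_K)$. For a finite distributive lattice $M$ and $a\in M$, $h_M(a)$ is the height of $a$ in $M$, and $R(M,x)=\sum_{a\in M}x^{h_M(a)}$ is the rank generating function. *)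

From HB Require Import structures.
From mathcomp Require Import all_boot all_order all_algebra.
Set Implicit Arguments. Unset Strict Implicit. Unset Printing Implicit Defensive.
Import Order.TTheory GRing.Theory.

Section GenericPoset.
Variable T : finType.

Definition is_chain (A : {set T}) (le : rel T) (C : {set T}) : bool :=
  (C \subset A) && [forall x in C, forall y in C, le x y || le y x].

Definition is_maximal_chain (A : {set T}) (le : rel T) (C : {set T}) : bool :=
  is_chain A le C &&
  [forall D : {set T}, (is_chain A le D && (C \subset D)) ==> (D \subset C)].

Definition height (A : {set T}) (le : rel T) (a : T) : nat :=
  (\max_(C : {set T} | is_chain A le C && [forall c in C, le c a]) #|C|).-1.

Definition rank_gen (A : {set T}) (le : rel T) : {poly int} :=
  \sum_(a in A) 'X^(height A le a).

Definition filters (le : rel T) : {set {set T}} :=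
  [set U : {set T} | [forall x in U, forall y, le x y ==> (y \in U)]].

End GenericPoset.

(** Reverse inclusion: the order on F(P). *)
Definition revincl (T : finType) : rel {set T} := fun a b => b \subset a.

Section Expansion.
Variables (d : Order.disp_t) (P : finPOrderType d).

(** L = F(P). *)
Definition FL : {set {set P}} := filters (fun x y : P => (x <= y)%O).

(** The lat_interval [k0, k1] of L (k0 <= k1 means k1 \subset k0). *)
Definition lat_interval (k0 k1 : {set P}) : {set {set P}} :=
  [set a in FL | revincl k0 a && revincl a k1].

Definition is_cutting (k0 k1 : {set P}) : Prop :=
  [/\ k0 \in FL, k1 \in FL, revincl k0 k1 &
      forall C : {set {set P}}, is_maximal_chain FL (@revincl P) C ->
        exists2 a, a \in C & a \in lat_interval k0 k1].

Definition S0 (k0 : {set P}) : {set P} :=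
  [set s | (s \notin k0) && [forall t, ((s < t)%O && (t \notin k0)) ==> false]].
Definition S1 (k1 : {set P}) : {set P} :=
  [set s | (s \in k1) && [forall t, ((t < s)%O && (t \in k1)) ==> false]].

(** The relation on P_K = P + {x_K}; x_K is represented by None.
    (x_K is automatically incomparable to the elements of S = k0 \ k1.) *)
Definition relPK (k0 k1 : {set P}) : rel (option P) := fun u v =>
  match u, v with
  | Some z, Some y => (z <= y)%O
  | Some z, None => [exists s in S0 k0, (z <= s)%O]
  | None, Some y => [exists s in S1 k1, (s <= y)%O]
  | None, None => true
  end.

Definition convex_expansion (k0 k1 : {set P}) : {set {set option P}} :=
  filters (relPK k0 k1).

End Expansion.

From HB Require Import structures.
From mathcomp Require Import all_boot all_order all_algebra.
From mathcomp Require Import zify.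
Import Order.TTheory GRing.Theory.
Local Open Scope ring_scope.

Set Implicit Arguments. Unset Strict Implicit. Unset Printing Implicit Defensive.

(* In a lattice of filters ordered by reverse inclusion every interval [k, b]
   is graded by cardinality: the height of a filter a is #|b| - #|a|, because a
   chain above a has at most that many steps, and a filter c strictly inside b
   grows by one element by adding a maximal element of b :\: c.
   If k1 = set0 (resp. k0 = setT), the new element x_K is maximal (resp.
   minimal) in P_K, so P_K is again a poset. A filter of P_K either avoids x_K,
   and is then a filter of P inside k0 (as P :\: k0 lies below x_K), or
   contains x_K, and is then a filter of P containing k1 (which lies above x_K)
   plus x_K. Reading off heights from cardinalities gives both formulas. *)

Lemma is_chain_revinclP (T : finType) (A C : {set {set T}}) :
  reflect (C \subset A /\
           {in C &, forall x y : {set T}, (x \subset y) || (y \subset x)})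
          (is_chain A (@revincl T) C).
Proof.
apply: (iffP andP) => -[CA Cch]; split=> //.
  move=> x y xC yC; have /forall_inP/(_ x xC)/forall_inP/(_ y yC) := Cch.
  by rewrite orbC.
by apply/forall_inP=> x xC; apply/forall_inP=> y yC; rewrite orbC Cch.
Qed.

Lemma chain_card_le (T : finType) (C : {set {set T}}) (a b : {set T}) :
  {in C &, forall x y : {set T}, (x \subset y) || (y \subset x)} ->
  {in C, forall c : {set T}, (a \subset c) && (c \subset b)} ->
  (#|C| <= (#|b| - #|a|).+1)%N.
Proof.
move=> Cch Cab; rewrite cardE -(size_map (fun c : {set T} => #|c|)).
rewrite -[(_ - _).+1](size_iota #|a|); apply: uniq_leq_size.
  rewrite map_inj_in_uniq ?enum_uniq // => x y; rewrite !mem_enum => xC yC /= Exy.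
  case/orP: (Cch x y xC yC) => sub; apply/eqP; first by rewrite eqEcard sub Exy /=.
  by rewrite eq_sym eqEcard sub Exy /=.
move=> n /mapP[c]; rewrite mem_enum => /Cab /andP[ac cb] ->.
have := subset_leq_card ac; have := subset_leq_card cb; rewrite mem_iota; lia.
Qed.

Section Filters.
Variables (T : finType) (le : rel T).

Lemma filterP (U : {set T}) :
  reflect (forall x y, x \in U -> le x y -> y \in U) (U \in filters le).
Proof.
rewrite inE; apply: (iffP forall_inP) => [U_up x y xU | U_up x xU].
  by move/forall_inP: (U_up x xU); apply.
by apply/forall_inP => y; apply: U_up.
Qed.

Definition filter_interval (k b : {set T}) : {set {set T}} :=
  [set c in filters le | (k \subset c) && (c \subset b)].

Lemma filtersE : filters le = filter_interval set0 setT.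
Proof.
by apply/setP => c; rewrite /filter_interval [in RHS]inE sub0set subsetT !andbT.
Qed.

Hypotheses (le_refl : reflexive le) (le_trans : transitive le)
  (le_anti : antisymmetric le).

Lemma exists_maximal (A : {set T}) z : z \in A ->
  exists s, [/\ s \in A, le z s & forall t, t \in A -> le s t -> t = s].
Proof.
move=> zA; have zP : (z \in A) && le z z by rewrite zA le_refl.
pose up x := [set y | le x y].
have [s /andP[sA zs] s_min] :=
  @arg_minnP _ z (fun s => (s \in A) && le z s) (fun s => #|up s|) zP.
exists s; split=> // t tA st; apply/eqP; apply: contraT => ts.
have up_proper : up t \proper up s.
  rewrite properEneq; apply/andP; split; last first.
    by apply/subsetP => y; rewrite !inE; apply: le_trans.
  apply: contra ts => /eqP up_eq; have : s \in up t by rewrite up_eq inE.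
  by rewrite inE => lts; rewrite (@le_anti t s) ?st ?lts.
have := s_min t; rewrite tA (le_trans zs st) => /(_ isT).
by rewrite leqNgt proper_card.
Qed.

Lemma filter_extend (c b : {set T}) :
  c \in filters le -> b \in filters le -> c \proper b ->
  exists2 x, x \in b :\: c & x |: c \in filters le.
Proof.
move=> /filterP c_up /filterP b_up /properP[_ [z zb zc]].
have zbc : z \in b :\: c by rewrite inE zc.
have [x [/setDP[xb xc] _ x_max]] := exists_maximal zbc.
exists x; first by rewrite inE xc.
apply/filterP => u v; rewrite !inE => /predU1P[->|uc] uv.
  case vc: (v \in c); first by rewrite orbT.
  by rewrite (x_max v) ?eqxx // inE vc (b_up x).
by rewrite (c_up u v) ?orbT.
Qed.

Lemma exists_saturated_chain (k b c : {set T}) :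
  b \in filters le -> c \in filter_interval k b ->
  exists D : {set {set T}},
    [/\ D \subset filter_interval k b,
        {in D &, forall x y : {set T}, (x \subset y) || (y \subset x)},
        {in D, forall d : {set T}, c \subset d} & #|D| = (#|b| - #|c|).+1].
Proof.
move=> bF; move cbn: (#|b| - #|c|)%N => n.
elim: n c cbn => [|n IHn] c cbn cI.
  exists [set c]; split; rewrite ?sub1set ?cards1 //.
    by move=> x y /set1P-> /set1P->; rewrite subxx.
  by move=> d /set1P->.
move: (cI); rewrite inE => /and3P[cF kc cb].
have cb_proper : c \proper b.
  by rewrite properEneq cb andbT; apply/eqP => cb_eq; move: cbn; rewrite cb_eq subnn.
have [x /setDP[xb xc] xcF] := filter_extend cF bF cb_proper.
have xcI : x |: c \in filter_interval k b.
  by rewrite inE xcF subUset sub1set xb cb (subset_trans kc (subsetUr _ _)).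
have [|D [DI Dch Dup Dcard]] := IHn (x |: c) _ xcI.
  by rewrite cardsU1 xc; lia.
have c_subD : {in D, forall d : {set T}, c \subset d}.
  by move=> d /Dup; apply: subset_trans; apply: subsetUr.
exists (c |: D); split.
- by rewrite subUset sub1set cI DI.
- move=> y z /setU1P[->|yD] /setU1P[->|zD]; rewrite ?subxx ?c_subD ?orbT //.
  exact: Dch.
- by move=> d /setU1P[->|/c_subD].
- rewrite cardsU1 Dcard; suff /negbTE-> : c \notin D by [].
  by apply: contra xc => /Dup; rewrite subUset sub1set => /andP[].
Qed.

Lemma height_filter_interval (k b a : {set T}) :
  b \in filters le -> a \in filter_interval k b ->
  height (filter_interval k b) (@revincl T) a = (#|b| - #|a|)%N.
Proof.
move=> bF aI; rewrite /height.
set m := \max_(C | _) _; suff -> : m = (#|b| - #|a|).+1 by [].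
apply/eqP; rewrite eqn_leq; apply/andP; split.
  apply/bigmax_leqP => C /andP[/is_chain_revinclP[CI Cch] /forall_inP Cup].
  apply: chain_card_le Cch _ => c cC; rewrite (Cup c cC : a \subset c) /=.
  by have := subsetP CI c cC; rewrite inE => /and3P[].
have [D [DI Dch Dup <-]] := exists_saturated_chain bF aI.
apply: leq_bigmax_cond; rewrite (introT (is_chain_revinclP _ _)) //=.
by apply/forall_inP.
Qed.

Lemma rank_gen_filter_interval (k b : {set T}) : b \in filters le ->
  rank_gen (filter_interval k b) (@revincl T) =
  \sum_(a in filter_interval k b) 'X^(#|b| - #|a|).
Proof. by move=> bF; apply: eq_bigr => a aI; rewrite height_filter_interval. Qed.

Lemma setT_in_filters : setT \in filters le.
Proof. by apply/filterP => x y; rewrite inE. Qed.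

Lemma height_filters (a : {set T}) : a \in filters le ->
  height (filters le) (@revincl T) a = (#|T| - #|a|)%N.
Proof.
by rewrite filtersE => aF; rewrite height_filter_interval ?cardsT ?setT_in_filters.
Qed.

Lemma rank_gen_filters :
  rank_gen (filters le) (@revincl T) = \sum_(a in filters le) 'X^(#|T| - #|a|).
Proof. by apply: eq_bigr => a aF; rewrite height_filters. Qed.

End Filters.

Section SetsOfOption.
Variable T : finType.

Lemma Some_in_imset (U : {set T}) x : (Some x \in Some @: U) = (x \in U).
Proof. exact/mem_imset/Some_inj. Qed.

Lemma None_in_imset (U : {set T}) : (None \in Some @: U) = false.
Proof. by apply/imsetP => -[]. Qed.

Lemma card_Some_imset (U : {set T}) : #|Some @: U| = #|U|.
Proof. exact/card_imset/Some_inj. Qed.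

Lemma card_None_Some_imset (U : {set T}) : #|None |: Some @: U| = #|U|.+1.
Proof. by rewrite cardsU1 None_in_imset card_Some_imset. Qed.

Lemma Some_in_setU1_imset (U : {set T}) x :
  (Some x \in None |: Some @: U) = (x \in U).
Proof. by rewrite in_setU1 Some_in_imset. Qed.

Lemma big_set_option (V : nmodType) (W : {set {set option T}})
    (F : {set option T} -> V) :
  \sum_(A in W) F A =
  \sum_(U : {set T} | Some @: U \in W) F (Some @: U) +
  \sum_(U : {set T} | None |: Some @: U \in W) F (None |: Some @: U).
Proof.
pose restr (A : {set option T}) := [set x | Some x \in A].
have restr_Some (U : {set T}) : restr (Some @: U) = U.
  by apply/setP => x; rewrite inE Some_in_imset.
have restr_None (U : {set T}) : restr (None |: Some @: U) = U.
  by apply/setP => x; rewrite inE in_setU1 Some_in_imset.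
rewrite (bigID [pred A : {set option T} | None \in A]) /= addrC; congr (_ + _).
  rewrite (reindex_onto (fun U : {set T} => Some @: U) restr) => [|A /andP[_ NA]].
    by apply: eq_bigl => U; rewrite None_in_imset restr_Some eqxx !andbT.
  by apply/setP => -[x|]; rewrite ?Some_in_imset ?None_in_imset ?inE // (negbTE NA).
rewrite (reindex_onto (fun U : {set T} => None |: Some @: U) restr) => [|A /andP[_ NA]].
  by apply: eq_bigl => U; rewrite setU11 restr_None eqxx !andbT.
by apply/setP => -[x|]; rewrite !inE ?Some_in_imset ?None_in_imset ?inE // NA.
Qed.

End SetsOfOption.

Section ConvexExpansion.
Variables (d : Order.disp_t) (P : finPOrderType d).

Lemma lat_intervalE (k0 k1 : {set P}) :
  lat_interval k0 k1 = filter_interval (fun x y : P => (x <= y)%O) k1 k0.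
Proof.
by apply/setP => U; rewrite /filter_interval !inE [_ && revincl _ _]andbC.
Qed.

Lemma lat_interval_setT_set0 : lat_interval setT set0 = FL P.
Proof.
by apply/setP => U; rewrite /lat_interval [in LHS]inE /revincl subsetT sub0set !andbT.
Qed.

Lemma height_FL (U : {set P}) : U \in FL P ->
  height (FL P) (@revincl P) U = (#|P| - #|U|)%N.
Proof. exact: height_filters le_refl le_trans le_anti U. Qed.

Lemma rank_gen_FL :
  rank_gen (FL P) (@revincl P) = \sum_(U in FL P) 'X^(#|P| - #|U|).
Proof. exact: rank_gen_filters le_refl le_trans le_anti. Qed.

Lemma rank_gen_lat_interval (k0 k1 : {set P}) : k0 \in FL P ->
  rank_gen (lat_interval k0 k1) (@revincl P) =
  \sum_(U in lat_interval k0 k1) 'X^(#|k0| - #|U|).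
Proof.
by move=> k0F; rewrite lat_intervalE (rank_gen_filter_interval le_refl le_trans le_anti).
Qed.

Lemma S0_setT : S0 (setT : {set P}) = set0.
Proof. by apply/setP => s; rewrite !inE. Qed.

Lemma S1_set0 : S1 (set0 : {set P}) = set0.
Proof. by apply/setP => s; rewrite !inE. Qed.

Section Cutting.
Variables k0 k1 : {set P}.
Hypotheses (k0_filter : k0 \in FL P) (k1_filter : k1 \in FL P).

Lemma relPK_SomeNone z : relPK k0 k1 (Some z) None = (z \notin k0).
Proof.
have /filterP k0_up := k0_filter; apply/existsP/idP => [[s /andP[]]|zk0].
  by rewrite inE => /andP[sk0 _] zs; apply: contra sk0 => /k0_up; apply.
have zA : z \in ~: k0 by rewrite inE.
have [s [sA zs s_max]] := exists_maximal le_refl le_trans le_anti zA.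
exists s; rewrite zs andbT inE; rewrite inE in sA; rewrite sA /=.
apply/forall_inP => t /andP[st tk0].
have ts : t = s by apply: s_max; [rewrite inE | apply: ltW].
by rewrite ts ltxx in st.
Qed.

Lemma relPK_NoneSome y : relPK k0 k1 None (Some y) = (y \in k1).
Proof.
have /filterP k1_up := k1_filter; apply/existsP/idP => [[s /andP[]]|yk1].
  by rewrite inE => /andP[sk1 _] /(k1_up s); apply.
have [s [sk1 sy s_min]] :=
  exists_maximal (lexx : reflexive (>=%O : rel P)) (@ge_trans _ P) (@ge_anti _ P) yk1.
exists s; rewrite (sy : (s <= y)%O) andbT inE sk1 /=.
apply/forall_inP => t /andP[ts tk1].
have tEs : t = s by apply: s_min; last apply: ltW.
by rewrite tEs ltxx in ts.
Qed.

Lemma mem_Some_expansion (U : {set P}) :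
  (Some @: U \in convex_expansion k0 k1) = (U \in lat_interval k0 set0).
Proof.
rewrite /lat_interval [in RHS]inE /revincl sub0set andbT.
apply/filterP/andP => [W_up | [/filterP U_up Uk0]].
  split.
    apply/filterP => x y xU xy.
    by rewrite -Some_in_imset (W_up (Some x)) ?Some_in_imset.
  apply/subsetP => z zU; apply: contraFT (None_in_imset U) => zk0.
  by apply: (W_up (Some z)); rewrite ?Some_in_imset ?relPK_SomeNone.
move=> [x|] [y|]; rewrite ?Some_in_imset ?None_in_imset //.
  exact: U_up.
by rewrite relPK_SomeNone => /(subsetP Uk0) ->.
Qed.

Lemma mem_None_expansion (U : {set P}) :
  (None |: Some @: U \in convex_expansion k0 k1) = (U \in lat_interval setT k1).
Proof.
rewrite /lat_interval [in RHS]inE /revincl subsetT.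
apply/filterP/andP => [W_up | [/filterP U_up k1U]].
  split.
    apply/filterP => x y xU xy.
    by rewrite -Some_in_setU1_imset (W_up (Some x)) ?Some_in_setU1_imset.
  apply/subsetP => y yk1; rewrite -Some_in_setU1_imset.
  by apply: (W_up None); rewrite ?setU11 ?relPK_NoneSome.
move=> [x|] [y|]; rewrite ?Some_in_setU1_imset ?setU11 //.
  exact: U_up.
by rewrite relPK_NoneSome => _ /(subsetP k1U).
Qed.

Hypothesis S0_or_S1_empty : S0 k0 = set0 \/ S1 k1 = set0.

Lemma relPK_not_through_xK x y :
  relPK k0 k1 (Some x) None -> relPK k0 k1 None (Some y) -> False.
Proof.
by case: S0_or_S1_empty => /= ->; [move=> /existsP[s] | move=> _ /existsP[s]];
  rewrite in_set0.
Qed.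

Lemma relPK_refl : reflexive (relPK k0 k1).
Proof. by case=> [x|] //=; rewrite lexx. Qed.

Lemma relPK_trans : transitive (relPK k0 k1).
Proof.
move=> [y|] [x|] [z|] //=.
- exact: le_trans.
- move=> xy /existsP[s /andP[sS ys]].
  by apply/existsP; exists s; rewrite sS (le_trans xy ys).
- move=> /existsP[s /andP[sS sx]] xz.
  by apply/existsP; exists s; rewrite sS (le_trans sx xz).
- by move=> xN Nz; case: (relPK_not_through_xK xN Nz).
Qed.

Lemma relPK_anti : antisymmetric (relPK k0 k1).
Proof.
move=> [x|] [y|] //=.
- by move=> /le_anti ->.
- by move=> /andP[xN Nx]; case: (relPK_not_through_xK xN Nx).
- by move=> /andP[Ny yN]; case: (relPK_not_through_xK yN Ny).
Qed.

Lemma rank_gen_convex_expansion :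
  rank_gen (convex_expansion k0 k1) (@revincl (option P)) =
  \sum_(U in lat_interval k0 set0) 'X^((#|P| - #|U|).+1) +
  \sum_(U in lat_interval setT k1) 'X^(#|P| - #|U|).
Proof.
rewrite (rank_gen_filters relPK_refl relPK_trans relPK_anti) card_option.
rewrite big_set_option; congr (_ + _); apply: eq_big => U.
- exact: mem_Some_expansion.
- by rewrite card_Some_imset subSn ?max_card.
- exact: mem_None_expansion.
- by rewrite card_None_Some_imset subSS.
Qed.

End Cutting.

End ConvexExpansion.

Theorem corollary5 (d : Order.disp_t) (P : finPOrderType d) (k0 k1 : {set P}) :
  is_cutting k0 k1 ->
  (k1 = set0 ->
     rank_gen (convex_expansion k0 k1) (@revincl (option P)) =
     rank_gen (@FL _ P) (@revincl P) +
     'X^((height (@FL _ P) (@revincl P) k0).+1) *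
       rank_gen (lat_interval k0 k1) (@revincl P)) /\
  (k0 = setT ->
     rank_gen (convex_expansion k0 k1) (@revincl (option P)) =
     rank_gen (lat_interval k0 k1) (@revincl P) + 'X * rank_gen (@FL _ P) (@revincl P)).
Proof.
case=> k0F k1F _ _; split=> ?; subst.
- rewrite (rank_gen_convex_expansion k0F k1F (or_intror (S1_set0 P))).
  rewrite lat_interval_setT_set0 -rank_gen_FL addrC height_FL //.
  rewrite (rank_gen_lat_interval _ k0F) mulr_sumr; congr (_ + _).
  apply: eq_bigr => U; rewrite inE => /and3P[_ Uk0 _]; rewrite -exprD.
  have k0P : (#|k0| <= #|P|)%N by rewrite -cardsT subset_leq_card ?subsetT.
  by congr (_ ^+ _); have := subset_leq_card Uk0; lia.
- rewrite (rank_gen_convex_expansion k0F k1F (or_introl (S0_setT P))).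
  rewrite lat_interval_setT_set0 rank_gen_FL (rank_gen_lat_interval _ k0F) cardsT.
  by rewrite addrC mulr_sumr; congr (_ + _); apply: eq_bigr => U _; rewrite exprS.
Qed.
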